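(* Let $n$ be a positive integer and $N=2^n$. Let $\delta,\alpha\in(0,1]$ be real numbers with $32\delta^2\le\alpha\le\delta/2$, $\alpha\ge N^{-2^{-300}}$, $\alpha\le2^{-30}$, and $$\frac{\delta}{\alpha}\log\frac{1}{2\alpha}\ge400\log N\cdot\log(8\log N).$$ Then there exists a set $A\subseteq\mathbb{Z}_2^n$ such that $\delta N\le|A|\le8\delta N$, $|\mathcal{R}_\alpha(A)|\ge\frac{\delta}{8\alpha^2}$ and $T_2(\mathcal{R}_\alpha(A))\le\frac{16\delta}{\alpha^4}$.
   Context: $\mathbb{Z}_2^n=(\mathbb{Z}/2\mathbb{Z})^n$ with inner product $\langle\vec x,\vec y\rangle=x_1y_1+\dots+x_ny_n\pmod 2$; $\log$ is the logarithm to base $2$. For $f:\mathbb{Z}_2^n\to\mathbb{C}$, $\widehat f(\vec r)=\sum_{\vec x}(-1)^{\langle\vec r,\vec x\rangle}f(\vec x)$; $A(\vec x)$ is the indicator of $A$, and $\mathcal{R}_\alpha(A)=\{\vec r:|\widehat A(\vec r)|\ge\alpha N\}$. For $B\subseteq\mathbb{Z}_2^n$, $T_2(B)=|\{(r_1,r_2,r_3,r_4)\in B^4: r_1+r_2=r_3+r_4\}|$. *)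

From mathcomp Require Import all_boot all_order all_algebra.
From mathcomp Require Import all_classical all_reals all_analysis.
Set Implicit Arguments. Unset Strict Implicit. Unset Printing Implicit Defensive.
Import Order.TTheory GRing.Theory Num.Theory.
Local Open Scope ring_scope.

(* Z_2^n is represented as {ffun 'I_n -> bool} (bit vectors, addition = xor). *)
Definition vec (n : nat) := {ffun 'I_n -> bool}.

Definition vadd n (x y : vec n) : vec n := [ffun i => xorb (x i) (y i)].

Definition ip n (x y : vec n) : bool := odd #|[set i | x i && y i]|.

Definition sgn (R : pzRingType) (b : bool) : R := if b then -1 else 1.

Definition fourier (R : pzRingType) n (A : {set vec n}) (r : vec n) : R :=
  \sum_(x in A) sgn R (ip r x).

Definition spec (R : realType) n (alpha : R) (A : {set vec n}) : {set vec n} :=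
  [set r | alpha * (2 ^+ n)%:R <= `| fourier R A r |].

Definition T2 n (B : {set vec n}) : nat :=
  #|[set q : vec n * vec n * vec n * vec n |
      [&& q.1.1.1 \in B, q.1.1.2 \in B, q.1.2 \in B, q.2 \in B &
          vadd q.1.1.1 q.1.1.2 == vadd q.1.2 q.2]]|.

Definition log2 (R : realType) (x : R) : R := ln x / ln 2.

From mathcomp Require Import all_boot all_order all_algebra all_field.
From mathcomp Require Import all_classical all_reals all_analysis.
From mathcomp Require Import zify ring lra.
Set Implicit Arguments. Unset Strict Implicit. Unset Printing Implicit Defensive.
Import Order.TTheory GRing.Theory Num.Theory.
Local Open Scope ring_scope.

(* Let q = 2^d be the power of two with q <= 1/(2 alpha) < 2q, and embed
   GF(q)^3 into Z_2^n (possible as q^3 <= alpha^-3 <= N).  For a in GF(q) the points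
   (x, a x, a^2 x) of the moment curve form a subspace U_a of size q, whose
   annihilator H_a has size N/q and Fourier transform (N/q) 1_{U_a}.  Let A be
   the union of the H_a over k ~ 5 delta q distinct slopes a.  Two annihilators
   meet in N/q^2 points, so the overlaps perturb |A| and every Fourier
   coefficient of A by at most k^2 N/q^2 <= (25/32) alpha N, while
   N/q >= 2 alpha N.  Hence |A| ~ k N/q ~ delta N and the large spectrum of A is
   exactly B, the union of the U_a.  By the Vandermonde determinant any two, or
   three, distinct U_a are independent, which bounds the additive energy of B
   by k^3 |B| + 3 k^2 q |B| + k q^3 = O(delta / alpha^4). *)

Lemma bool_natr (m : nat) : (m%:R : bool) = odd m.
Proof. by elim: m => // m IHm; rewrite -addn1 natrD IHm oddD; case: (odd m). Qed.

Section BinaryVectors.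
Variable n : nat.
Implicit Types x y s : vec n.

Lemma vaddE x y : vadd x y = x + y.
Proof. by apply/ffunP=> i; rewrite !ffunE; case: (x i); case: (y i). Qed.

Lemma addvv x : x + x = 0.
Proof. by apply/ffunP=> i; rewrite !ffunE; case: (x i). Qed.

Lemma oppvE x : - x = x.
Proof. by apply: (addrI x); rewrite addrN addvv. Qed.

Lemma ipE x y : ip x y = \sum_i x i * y i.
Proof.
rewrite /ip -bool_natr -sumr_const big_mkcond /=.
by apply: eq_bigr => i _; rewrite inE; case: (x i); case: (y i).
Qed.

Lemma ipC x y : ip x y = ip y x.
Proof. by rewrite !ipE; apply: eq_bigr => i _; rewrite mulrC. Qed.

Lemma ipDl x x' y : ip (x + x') y = ip x y + ip x' y.
Proof. by rewrite !ipE -big_split; apply: eq_bigr => i _; rewrite ffunE mulrDl. Qed.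

Lemma ipDr x y y' : ip x (y + y') = ip x y + ip x y'.
Proof. by rewrite ipC ipDl !(ipC x). Qed.

Lemma ip0l y : ip 0 y = false.
Proof. by rewrite ipE big1 // => i _; rewrite ffunE mul0r. Qed.

Lemma ip_delta s (i : 'I_n) : ip s [ffun j => j == i] = s i.
Proof.
rewrite ipE (bigD1 i) //= ffunE eqxx mulr1 big1 ?addr0 // => j /negbTE ji.
by rewrite ffunE ji mulr0.
Qed.

Lemma card_vec : #|{: vec n}| = (2 ^ n)%N.
Proof. by rewrite card_ffun card_bool card_ord. Qed.

Lemma T2_le_triples (B : {set vec n}) :
  (T2 B <= \sum_(t | [&& t.1.1 \in B, t.1.2 \in B & t.2 \in B])
             ((t.1.1 + t.1.2 + t.2)%R \in B))%N.
Proof.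
have r4E (r1 r2 r3 r4 : vec n) : vadd r1 r2 == vadd r3 r4 -> r4 = r1 + r2 + r3.
  by rewrite !vaddE => /eqP->; rewrite (addrC r3) -addrA addvv addr0.
rewrite /T2 -big_mkcondr /= sum1_card; set S4 := [set q | _].
rewrite -(@card_in_imset _ _ fst S4).
  apply/subset_leq_card/fintype.subsetP => _ /imsetP[[t r4] + ->].
  by rewrite inE unfold_in /= => /and5P[-> -> -> r4B /r4E <-].
move=> [t r4] [t' r4'] /[!inE] /= /and5P[_ _ _ _ /r4E->] /and5P[_ _ _ _ /r4E->].
by move=> /= ->.
Qed.

End BinaryVectors.

Section Characters.
Variable R : realType.

Lemma sgnD (b c : bool) : sgn R (b + c) = sgn R b * sgn R c.
Proof. by case: b; case: c; rewrite /sgn /= ?mulrNN ?mulr1 ?mul1r. Qed.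

Lemma normr_sgn b : `|sgn R b| = 1.
Proof. by case: b; rewrite /sgn ?normrN normr1. Qed.

Lemma sum_sgn_eq0 (T : finType) (h : T -> bool) (t : T -> T) :
  injective t -> (forall x, h (t x) = ~~ h x) -> \sum_x sgn R (h x) = 0.
Proof.
move=> t_inj ht; have hN : \sum_x sgn R (h x) = - \sum_x sgn R (h x).
  rewrite [LHS](reindex_inj t_inj) -sumrN.
  by apply: eq_bigr => x _; rewrite ht; case: (h x); rewrite /sgn ?opprK.
by apply/eqP; rewrite -[_ == 0](mulrn_eq0 _ 2) mulr2n addr_eq0 -hN.
Qed.

Lemma sum_sgn_ip n (s : vec n) :
  \sum_y sgn R (ip s y) = (s == 0)%:R * (2 ^ n)%N%:R.
Proof.
have [->|s0] := eqVneq s 0.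
  by rewrite mul1r -card_vec -sumr_const; apply: eq_bigr => y _; rewrite ip0l.
have [i si] : exists i, s i.
  apply/existsP; apply: contraNT s0; rewrite negb_exists => /forallP s0.
  by apply/eqP/ffunP=> i; rewrite ffunE; apply/negbTE.
rewrite mul0r (@sum_sgn_eq0 _ _ (fun y : vec n => y + [ffun j => j == i])) //.
- exact: addIr.
- by move=> y; rewrite ipDr ip_delta si; case: (ip s y).
Qed.

End Characters.

Section MomentCurve.
Variable F : fieldType.
Implicit Types a b c u v w : F.

Lemma moment2_eq0 a b u v :
  a != b -> u + v = 0 -> a * u + b * v = 0 -> u = 0 /\ v = 0.
Proof.
move=> ab e1 e2; have /eqP : (b - a) * u = 0.
  have -> : (b - a) * u = b * (u + v) - (a * u + b * v) by ring.
  by rewrite e1 e2 mulr0 subr0.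
rewrite mulf_eq0 subr_eq0 eq_sym (negbTE ab) => /eqP u0.
by move: e1; rewrite u0 add0r.
Qed.

Lemma moment3_eq0 a b c u v w :
  a != b -> b != c -> a != c ->
  u + v + w = 0 -> a * u + b * v + c * w = 0 ->
  a ^+ 2 * u + b ^+ 2 * v + c ^+ 2 * w = 0 -> [/\ u = 0, v = 0 & w = 0].
Proof.
move=> ab bc ac e1 e2 e3.
(* (a - b) (a - c) is the value at a of X^2 - (b + c) X + b c, which vanishes at b and c. *)
have /eqP : (a - b) * (a - c) * u = 0.
  have -> : (a - b) * (a - c) * u = a ^+ 2 * u + b ^+ 2 * v + c ^+ 2 * w
      - (b + c) * (a * u + b * v + c * w) + b * c * (u + v + w) by ring.
  by rewrite e1 e2 e3 !mulr0 subr0 addr0.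
rewrite !mulf_eq0 !subr_eq0 (negbTE ab) (negbTE ac) /= => /eqP u0.
move: e1 e2; rewrite u0 mulr0 !add0r => e1 e2.
by have [] := moment2_eq0 bc e1 e2.
Qed.

End MomentCurve.

Lemma leq_sum_cover (I T : finType) (g : I -> T) (P : pred T) (f : T -> nat) :
  (forall r, P r -> r \in codom g) -> (\sum_(r | P r) f r <= \sum_p f (g p))%N.
Proof.
move=> sBg; rewrite (partition_big g predT) //= [X in (_ <= X)%N](bigID P) /=.
apply: leq_trans (leq_addr _ _); apply: leq_sum => r /sBg /codomP[p ->].
by rewrite (bigD1 p) //= leq_addr.
Qed.

Lemma sum_mem_fiber_inj (T S U : finType) (g : T -> U) (pi : T -> S) (B : {set U}) :
  (forall p p', pi p = pi p' -> g p = g p' -> p = p') ->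
  (\sum_p (g p \in B) <= #|S| * #|B|)%N.
Proof.
move=> g_inj; rewrite (partition_big pi predT) //= -sum_nat_const leq_sum // => s _.
rewrite -big_mkcondr /= sum1_card -(@card_in_imset _ _ g); last first.
  by move=> p p' /andP[/eqP ps _] /andP[/eqP p's _]; apply: g_inj; rewrite ps p's.
by apply/subset_leq_card/fintype.subsetP => _ /imsetP[p /andP[_ gpB] ->].
Qed.

Lemma sum_ord_eq k (i : 'I_k) c : (\sum_(j < k) (i == j) * c = c)%N.
Proof.
by rewrite (bigD1 i) //= eqxx mul1n big1 ?addn0 // => j /negbTE; rewrite eq_sym => ->.
Qed.

Lemma sum_ord3_deltas k (b c e : nat) :
  (\sum_(i < k) \sum_(j < k) \sum_(l < k)
     (b + ((i == j) + (j == l) + (i == l)) * c + ((i == j) && (j == l)) * e)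
   = k ^ 3 * b + 3 * (k ^ 2 * c) + k * e)%N.
Proof.
have inner (i j : 'I_k) : (\sum_(l < k)
    (b + ((i == j) + (j == l) + (i == l)) * c + ((i == j) && (j == l)) * e)
    = k * b + k * ((i == j) * c) + 2 * c + (i == j) * e)%N.
  rewrite (eq_bigr (fun l => b + (i == j) * c + (j == l) * c + (i == l) * c
                             + (i == j) * ((j == l) * e)))%N; last first.
    by move=> l _; case: (i == j); case: (j == l); case: (i == l); lia.
  rewrite !big_split /= !sum_ord_eq !sum_nat_const card_ord -big_distrr /= sum_ord_eq; lia.
under eq_bigr => i _ do under eq_bigr => j _ do rewrite inner.
under eq_bigr => i _ do rewrite !big_split /= !sum_nat_const card_ord -big_distrr /= !sum_ord_eq.
rewrite !big_split /= !sum_nat_const card_ord; lia.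
Qed.

Lemma delta_le_inv64 (R : realFieldType) (delta alpha : R) :
  0 < delta -> 32 * delta ^+ 2 <= alpha -> alpha <= delta / 2 -> delta <= 1 / 64.
Proof. nra. Qed.

Lemma energy_bound_arith (R : realFieldType) (delta alpha q k : R) :
  0 < alpha -> 0 < q -> 0 < delta <= 1 / 64 -> 32 * delta ^+ 2 <= alpha ->
  2 * alpha * q <= 1 -> 0 <= k <= 5 * delta * q ->
  (k ^+ 4 * q + 3 * (k ^+ 3 * q ^+ 2) + k * q ^+ 3) * alpha ^+ 4 <= 16 * delta.
Proof.
move=> a0 q0 /andP[d0 d64] hda haq /andP[k0 k5].
have dq : delta ^+ 2 * q <= 1 / 64.
  have : delta ^+ 2 * q <= alpha * q / 32 by rewrite ler_pdivlMr //; nra.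
  lra.
have k3 : k ^+ 3 <= 2 * delta * q ^+ 2.
  have : k ^+ 3 <= (5 * delta * q) ^+ 3 by rewrite lerXn2r // nnegrE; nra.
  have -> : (5 * delta * q) ^+ 3 = 125 * delta * q ^+ 2 * (delta ^+ 2 * q) by ring.
  have : 0 <= delta * q ^+ 2 by rewrite mulr_ge0 ?exprn_ge0 // ltW.
  nra.
have k4 : k ^+ 4 <= delta * q ^+ 3.
  have : k ^+ 4 <= (5 * delta * q) * (2 * delta * q ^+ 2).
    by rewrite exprSr mulrC ler_pM // ?exprn_ge0.
  have : 0 <= delta * q ^+ 3 by rewrite mulr_ge0 ?exprn_ge0 // ltW.
  nra.
have : k ^+ 4 * q + 3 * (k ^+ 3 * q ^+ 2) + k * q ^+ 3 <= 12 * delta * q ^+ 4.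
  have : k ^+ 4 * q <= delta * q ^+ 4 by rewrite [q ^+ 4]exprSr mulrA ler_pM2r.
  have : k ^+ 3 * q ^+ 2 <= 2 * delta * q ^+ 4.
    by rewrite -[4%N]/(2 + 2)%N exprD mulrA ler_pM2r ?exprn_gt0.
  have : k * q ^+ 3 <= 5 * delta * q ^+ 4.
    by rewrite [q ^+ 4]exprS mulrA ler_pM2r ?exprn_gt0.
  lra.
move=> h; apply: le_trans (ler_wpM2r (exprn_ge0 4 (ltW a0)) h) _.
have -> : 12 * delta * q ^+ 4 * alpha ^+ 4 = 12 * delta * (alpha * q) ^+ 4 by ring.
have : (alpha * q) ^+ 4 <= 1 by rewrite exprn_ile1 ?mulr_ge0 ?ltW //; lra.
nra.
Qed.

Section MomentSubspaces.
Variables (F : finFieldType) (n : nat) (emb : F * F * F -> vec n).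
Hypothesis emb_add : {morph emb : u v / u + v}.
Hypothesis emb_eq0 : forall u, emb u = 0 -> u = 0.

Definition phi a x : vec n := emb (x, a * x, a ^+ 2 * x).

Lemma phiD a : {morph phi a : x y / x + y}.
Proof. by move=> x y; rewrite /phi -emb_add !mulrDr. Qed.

Lemma phi0 a : phi a 0 = 0.
Proof. by apply: (addrI (phi a 0)); rewrite -phiD !addr0. Qed.

Lemma phiB a : {morph phi a : x y / x - y}.
Proof. by move=> x y; apply: (addIr (phi a y)); rewrite -phiD !subrK. Qed.

Lemma phi_inj a : injective (phi a).
Proof.
move=> x y e; apply/eqP; rewrite -subr_eq0; apply/eqP.
by have /emb_eq0[] : phi a (x - y) = 0 by rewrite phiB e subrr.
Qed.

Lemma phi2_eq0 a b x y : a != b -> phi a x + phi b y = 0 -> x = 0 /\ y = 0.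
Proof. by move=> ab; rewrite -emb_add => /emb_eq0[e1 e2 _]; apply: moment2_eq0 ab e1 e2. Qed.

Lemma phi3_eq0 a b c x y z : a != b -> b != c -> a != c ->
  phi a x + phi b y + phi c z = 0 -> [/\ x = 0, y = 0 & z = 0].
Proof.
move=> ab bc ac; rewrite -!emb_add => /emb_eq0[e1 e2 e3].
exact: moment3_eq0 ab bc ac e1 e2 e3.
Qed.

Lemma phi2_eq0E a b x y : a != b -> (phi a x + phi b y == 0) = (x == 0) && (y == 0).
Proof.
move=> ab; apply/eqP/andP => [/(phi2_eq0 ab)[-> ->] //|[/eqP-> /eqP->]].
by rewrite !phi0 addr0.
Qed.

Lemma phi2_inj a b x y x' y' : a != b ->
  phi a x + phi b y = phi a x' + phi b y' -> x = x' /\ y = y'.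
Proof.
move=> ab e; have [] := @phi2_eq0 a b (x - x') (y - y') ab.
  by rewrite !phiB addrACA -opprD e subrr.
by move/eqP; rewrite subr_eq0 => /eqP -> /eqP; rewrite subr_eq0 => /eqP ->.
Qed.

Lemma phi3_inj a b c x y z x' y' z' : a != b -> b != c -> a != c ->
  phi a x + phi b y + phi c z = phi a x' + phi b y' + phi c z' ->
  [/\ x = x', y = y' & z = z'].
Proof.
move=> ab bc ac e; have [] := @phi3_eq0 a b c (x - x') (y - y') (z - z') ab bc ac.
  by rewrite !phiB [X in X + _]addrACA -opprD addrACA -opprD e subrr.
by move=> /eqP + /eqP + /eqP; rewrite !subr_eq0 => /eqP -> /eqP -> /eqP ->.
Qed.

Variables (k : nat) (lam : 'I_k -> F).
Hypothesis lam_inj : injective lam.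

Definition U a : {set vec n} := [set phi a x | x : F].
Definition B : {set vec n} := \bigcup_(i < k) U (lam i).

Lemma B_sub_codom r : r \in B -> r \in codom (fun p : 'I_k * F => phi (lam p.1) p.2).
Proof. by move=> /bigcupP[i _ /imsetP[x _ ->]]; apply/codomP; exists (i, x). Qed.

Lemma card_B_le : (#|B| <= k * #|F|)%N.
Proof.
rewrite -sum1_card; apply: leq_trans (leq_sum_cover (fun=> 1%N) B_sub_codom) _.
by rewrite sum1_card card_prod card_ord.
Qed.

Lemma card_B_ge : (k * #|F|.-1 <= #|B|)%N.
Proof.
pose P := finset.setX [set: 'I_k] [set~ (0 : F)].
have -> : (k * #|F|.-1 = #|P|)%N by rewrite cardsX cardsC1 cardsT card_ord.
pose g (p : 'I_k * F) := phi (lam p.1) p.2.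
have g_inj : {in P &, injective g}.
  move=> [i x] [j y] /[!inE] /= x0 y0 e.
  have ij : lam i = lam j.
    apply/eqP; apply: contraNT x0 => ij.
    suff [->] : x = 0 /\ y = 0 by [].
    by apply: (phi2_eq0 ij); rewrite [phi _ x]e addvv.
  by move/lam_inj: ij e => <- /phi_inj /= ->.
rewrite -(card_in_imset g_inj); apply/subset_leq_card/fintype.subsetP.
by move=> _ /imsetP[[i x] _ ->]; apply/bigcupP; exists i => //; apply: imset_f.
Qed.

Definition count3 (i j l : 'I_k) : nat :=
  \sum_(u : F * F * F) ((phi (lam i) u.1.1 + phi (lam j) u.1.2 + phi (lam l) u.2)%R \in B).

Lemma count3_le_cube i j l : (count3 i j l <= #|F| ^ 3)%N.
Proof.
apply: (@leq_trans (\sum_(u : F * F * F) 1%N)).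
  by apply: leq_sum => u _; case: (_ \in B).
by rewrite sum_nat_const !card_prod muln1 !expnS expn0 muln1 mulnA.
Qed.

Lemma count3_le_ij i j l : lam i != lam j -> (count3 i j l <= #|F| * #|B|)%N.
Proof.
move=> ij; apply: (sum_mem_fiber_inj (pi := fun u : F * F * F => u.2)).
by move=> [[x y] z] [[x' y'] z'] /= <- /addIr/(phi2_inj ij)[-> ->].
Qed.

Lemma count3_le_jl i j l : lam j != lam l -> (count3 i j l <= #|F| * #|B|)%N.
Proof.
move=> jl; apply: (sum_mem_fiber_inj (pi := fun u : F * F * F => u.1.1)).
by move=> [[x y] z] [[x' y'] z'] /= <-; rewrite -!addrA => /addrI/(phi2_inj jl)[-> ->].
Qed.

Lemma count3_le_distinct i j l : lam i != lam j -> lam j != lam l -> lam i != lam l ->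
  (count3 i j l <= #|B|)%N.
Proof.
move=> ij jl il; rewrite -[#|B|]mul1n -card_unit.
apply: (sum_mem_fiber_inj (pi := fun=> tt)).
by move=> [[x y] z] [[x' y'] z'] _ /= /(phi3_inj ij jl il)[-> -> ->].
Qed.

Lemma count3_le i j l :
  (count3 i j l <= #|B| + ((i == j) + (j == l) + (i == l)) * (#|F| * #|B|)
                   + ((i == j) && (j == l)) * #|F| ^ 3)%N.
Proof.
have neq (u v : 'I_k) : u != v -> lam u != lam v by rewrite (inj_eq lam_inj).
have [<-|ij] := eqVneq i j.
  have [<-|il] := eqVneq i l; first by apply: leq_trans (count3_le_cube _ _ _) _; lia.
  by apply: leq_trans (count3_le_jl _ (neq _ _ il)) _; lia.
have [<-|jl] := eqVneq j l; first by apply: leq_trans (count3_le_ij _ (neq _ _ ij)) _; lia.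
have [<-|il] := eqVneq i l; first by apply: leq_trans (count3_le_ij _ (neq _ _ ij)) _; lia.
by apply: leq_trans (count3_le_distinct (neq _ _ ij) (neq _ _ jl) (neq _ _ il)) _; lia.
Qed.

Lemma T2_B_le :
  (T2 B <= k ^ 3 * #|B| + 3 * (k ^ 2 * (#|F| * #|B|)) + k * #|F| ^ 3)%N.
Proof.
apply: leq_trans (T2_le_triples B) _; rewrite -sum_ord3_deltas.
pose g (p : 'I_k * 'I_k * 'I_k * (F * F * F)) :=
  (phi (lam p.1.1.1) p.2.1.1, phi (lam p.1.1.2) p.2.1.2, phi (lam p.1.2) p.2.2).
have B3_sub_codom (t : vec n * vec n * vec n) :
    [&& t.1.1 \in B, t.1.2 \in B & t.2 \in B] -> t \in codom g.
  move: t => [[r1 r2] r3] /= /and3P[/B_sub_codom/codomP[[i x] ->]].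
  move=> /B_sub_codom/codomP[[j y] ->] /B_sub_codom/codomP[[l z] ->].
  by apply/codomP; exists (i, j, l, (x, y, z)).
apply: leq_trans (leq_sum_cover
  (fun t : vec n * vec n * vec n => (t.1.1 + t.1.2 + t.2)%R \in B) B3_sub_codom) _.
have -> : (\sum_p (((g p).1.1 + (g p).1.2 + (g p).2)%R \in B)
           = \sum_(i < k) \sum_(j < k) \sum_(l < k) count3 i j l)%N.
  by rewrite [RHS]pair_bigA [RHS]pair_bigA /count3 [RHS]pair_bigA.
by do 3!apply: leq_sum => ? _; exact: count3_le.
Qed.

Definition H a : {set vec n} := [set y | [forall x, ~~ ip (phi a x) y]].
Definition A : {set vec n} := \bigcup_(i < k) H (lam i).
Definition mult y : nat := \sum_(i < k) (y \in H (lam i)).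
Definition overlap : nat := \sum_y (mult y).-1.

Variable R : realType.
Local Notation q := (#|F|%:R : R).
Local Notation N := ((2 ^ n)%N%:R : R).

Lemma sum_sgn_phi a y : \sum_x sgn R (ip (phi a x) y) = (y \in H a)%:R * q.
Proof.
rewrite inE; have [Hy|/forallP] := forallP.
  by rewrite mul1r -sumr_const; apply: eq_bigr => x _; rewrite (negbTE (Hy x)).
rewrite negb_forall => /existsP[x0 /negPn yx0]; rewrite mul0r.
apply: (@sum_sgn_eq0 _ _ _ (+%R^~ x0)); first exact: addIr.
by move=> x; rewrite phiD ipDl yx0; case: (ip _ _).
Qed.

Lemma sum_eq_phi a r : (\sum_x (phi a x == r) = (r \in U a))%N.
Proof.
have [/imsetP[x0 _ ->]|rU] := boolP (r \in U a).
  by rewrite (bigD1 x0) //= eqxx big1 // => x /negbTE; rewrite (inj_eq (@phi_inj a)) => ->.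
by rewrite big1 // => x _; case: eqP => // phix; rewrite -phix imset_f in rU.
Qed.

Lemma fourier_H a r : q * fourier R (H a) r = N * (r \in U a)%:R.
Proof.
rewrite /fourier big_mkcond mulr_sumr /=.
transitivity (\sum_y \sum_x sgn R (ip (phi a x + r) y)).
  apply: eq_bigr => y _; under eq_bigr do rewrite ipDl sgnD.
  rewrite -mulr_suml sum_sgn_phi.
  by case: (y \in H a); rewrite ?mul1r ?mul0r ?mulr0 // mulrC.
rewrite exchange_big /=; under eq_bigr do rewrite sum_sgn_ip addr_eq0 oppvE.
by rewrite -mulr_suml -natr_sum sum_eq_phi mulrC.
Qed.

Lemma card_H a : (#|H a| * #|F| = 2 ^ n)%N.
Proof.
apply/eqP; rewrite -(eqr_nat R) natrM mulrC; apply/eqP.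
have U0 : 0 \in U a by apply/imsetP; exists 0; rewrite ?phi0.
have := fourier_H a 0; rewrite U0 mulr1 => <-; rewrite /fourier -[#|H a|%:R]sumr_const.
by congr (_ * _); apply: eq_bigr => y _; rewrite ip0l.
Qed.

Lemma card_HI a b : a != b -> (#|H a :&: H b| * #|F| ^ 2 = 2 ^ n)%N.
Proof.
move=> ab; apply/eqP; rewrite -(eqr_nat R) natrM natrX; apply/eqP.
transitivity (\sum_y (\sum_x sgn R (ip (phi a x) y)) * \sum_z sgn R (ip (phi b z) y)).
  rewrite -sum1_card natr_sum mulr_suml big_mkcond /=; apply: eq_bigr => y _.
  rewrite !sum_sgn_phi inE.
  by case: (y \in H a); case: (y \in H b); rewrite ?mul0r ?mulr0 ?mul1r ?expr2.
transitivity (\sum_y \sum_x \sum_z sgn R (ip (phi a x + phi b z) y)).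
  apply: eq_bigr => y _; rewrite mulr_suml; apply: eq_bigr => x _.
  by rewrite mulr_sumr; apply: eq_bigr => z _; rewrite ipDl sgnD.
rewrite exchange_big /=; under eq_bigr do rewrite exchange_big /=.
under eq_bigr do under eq_bigr do rewrite sum_sgn_ip phi2_eq0E //.
rewrite (bigD1 0) //= [X in _ + X]big1 ?addr0 => [|x /negbTE x0]; last first.
  by rewrite big1 // => z _; rewrite x0 mul0r.
by rewrite (bigD1 0) //= big1 ?eqxx ?mul1r ?addr0 // => z /negbTE ->; rewrite mul0r.
Qed.

Lemma mem_A y : (y \in A) = (0 < mult y)%N.
Proof.
apply/bigcupP/idP => [[i _ yH]|]; first by rewrite /mult (bigD1 i) //= yH.
rewrite lt0n sum_nat_eq0 => /forallPn[i /=].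
by case: (boolP (y \in H (lam i))) => // yH _; exists i.
Qed.

Lemma card_A_overlap : ((#|A| + overlap) * #|F| = k * 2 ^ n)%N.
Proof.
have -> : (#|A| + overlap = \sum_i #|H (lam i)|)%N.
  rewrite -sum1_card big_mkcond -big_split /=.
  transitivity (\sum_y mult y)%N; first by apply: eq_bigr => y _; rewrite mem_A; case: (mult y).
  by rewrite /mult exchange_big; apply: eq_bigr => i _; rewrite -sum1_card [RHS]big_mkcond.
by rewrite big_distrl /= (eq_bigr _ (fun i _ => card_H (lam i))) sum_nat_const card_ord.
Qed.

Lemma mult_pairs y : (mult y * (mult y).-1
  = \sum_i \sum_(j | j != i) ((y \in H (lam i)) && (y \in H (lam j))))%N.
Proof.
rewrite {1}/mult big_distrl /=; apply: eq_bigr => i _.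
have [yH|_] := boolP (y \in H (lam i)); last by rewrite mul0n big1.
by rewrite mul1n /mult (bigD1 i) //= yH.
Qed.

Lemma overlap_le : (overlap * #|F| ^ 2 <= k * k * 2 ^ n)%N.
Proof.
apply: (@leq_trans ((\sum_y mult y * (mult y).-1) * #|F| ^ 2)).
  by apply: leq_mul => //; apply: leq_sum => y _; case: (mult y) => //= c; rewrite leq_pmull.
have -> : (\sum_y mult y * (mult y).-1
           = \sum_i \sum_(j | j != i) #|H (lam i) :&: H (lam j)|)%N.
  under eq_bigr do rewrite mult_pairs.
  rewrite exchange_big; apply: eq_bigr => i _; rewrite exchange_big; apply: eq_bigr => j _.
  by rewrite -[RHS]sum1_card [RHS]big_mkcond; apply: eq_bigr => y _; rewrite !inE.
rewrite big_distrl /=; under eq_bigr do rewrite big_distrl /=.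
under eq_bigr => i _ do under eq_bigr => j ji do rewrite card_HI ?(inj_eq lam_inj) 1?eq_sym //.
apply: (@leq_trans (\sum_(i < k) \sum_(j < k) 2 ^ n)%N).
  by apply: leq_sum => i _; rewrite [X in (_ <= X)%N](bigD1 i) //= leq_addl.
by rewrite !sum_nat_const !card_ord mulnA.
Qed.

Lemma fourier_A_near r :
  `|fourier R A r - \sum_i fourier R (H (lam i)) r| <= overlap%:R.
Proof.
have -> : \sum_i fourier R (H (lam i)) r = \sum_y (mult y)%:R * sgn R (ip r y).
  rewrite /fourier; under eq_bigr do rewrite big_mkcond /=.
  rewrite exchange_big; apply: eq_bigr => y _; rewrite /mult natr_sum mulr_suml.
  by apply: eq_bigr => i _; case: (y \in _); rewrite ?mul1r ?mul0r.
have -> : fourier R A r = \sum_y (y \in A)%:R * sgn R (ip r y).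
  by rewrite /fourier big_mkcond; apply: eq_bigr => y _; case: (y \in A); rewrite ?mul1r ?mul0r.
rewrite -sumrB natr_sum; apply: le_trans (ler_norm_sum _ _ _) _; apply: ler_sum => y _.
rewrite -mulrBl normrM normr_sgn mulr1 mem_A; case: (mult y) => [|c].
  by rewrite subrr normr0.
by rewrite /= mulrSr ler_norml; have := ler0n R c; lra.
Qed.

Lemma sum_fourier_H r :
  q * \sum_i fourier R (H (lam i)) r = N * (\sum_i (r \in U (lam i)) : nat)%:R.
Proof. by rewrite natr_sum !mulr_sumr; apply: eq_bigr => i _; rewrite fourier_H. Qed.

Lemma card_F_gt0 : (0 < #|F|)%N.
Proof. by apply/card_gt0P; exists 0. Qed.

Lemma q_gt0 : 0 < q.
Proof. by rewrite ltr0n card_F_gt0. Qed.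

Lemma overlap_le_alpha (delta alpha : R) :
  32 * delta ^+ 2 <= alpha -> k%:R <= 5 * delta * q -> overlap%:R <= 25 / 32 * alpha * N.
Proof.
move=> hda k5; have N0 : 0 < N by rewrite ltr0n expn_gt0.
have qq0 : 0 < q * q by rewrite mulr_gt0 ?q_gt0.
have k0 : 0 <= k%:R :> R by [].
have := overlap_le; rewrite -(ler_nat R) !natrM => hE.
rewrite -(ler_pM2r qq0); apply: le_trans hE _.
have : k%:R * k%:R <= 25 / 32 * alpha * (q * q).
  have : k%:R * k%:R <= (5 * delta * q) * (5 * delta * q) by apply: ler_pM.
  have := q_gt0; nra.
nra.
Qed.

Lemma spec_A (delta alpha : R) : 0 < alpha ->
  32 * delta ^+ 2 <= alpha -> 2 * alpha * q <= 1 -> k%:R <= 5 * delta * q ->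
  spec alpha A = B.
Proof.
move=> a0 hda haq k5; have N0 : 0 < N by rewrite ltr0n expn_gt0.
have hE := overlap_le_alpha hda k5; apply/setP => r; rewrite inE natrXE.
have := fourier_A_near r; rewrite ler_distl => /andP[hlo hhi].
have hS := sum_fourier_H r; have q0 := q_gt0.
have [/bigcupP[i _ ri]|rB] := boolP (r \in B).
  have : N <= q * \sum_i fourier R (H (lam i)) r.
    by rewrite hS (bigD1 i) //= ri natrD mulrDr mulr1 lerDl mulr_ge0.
  by move=> h; apply: le_trans (ler_norm _); nra.
have S0 : \sum_i fourier R (H (lam i)) r = 0.
  apply/(mulfI (lt0r_neq0 q0)); rewrite hS mulr0 big1 ?mulr0 // => i _.
  by case: (boolP (r \in U (lam i))) => // ri; case/negP: rB; apply/bigcupP; exists i.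
rewrite S0 sub0r add0r in hlo hhi; apply/negbTE; rewrite -ltNge ltr_norml.
by apply/andP; split; nra.
Qed.

Lemma card_A_bounds (delta : R) : 0 < delta <= 1 / 64 ->
  3 * delta * q <= k%:R -> k%:R <= 5 * delta * q ->
  delta * N <= #|A|%:R <= 8 * delta * N.
Proof.
move=> /andP[d0 d64] k3 k5; have N0 : 0 < N by rewrite ltr0n expn_gt0.
have q0 := q_gt0; have e0 : 0 <= overlap%:R :> R by [].
have := card_A_overlap; move/(congr1 (fun m => m%:R : R)); rewrite natrM natrD natrM => hA.
have := overlap_le; rewrite -(ler_nat R) !natrM => hE.
apply/andP; split; last first.
  rewrite -(ler_pM2r q0); have : k%:R * N <= 5 * delta * q * N by rewrite ler_pM2r.
  nra.
have hk : delta * (q * q) <= k%:R * (q - k%:R).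
  have : 3 * delta * q * (59 / 64 * q) <= k%:R * (q - k%:R) by apply: ler_pM; nra.
  nra.
rewrite -(ler_pM2r (mulr_gt0 q0 q0)).
have : delta * (q * q) * N <= k%:R * (q - k%:R) * N by rewrite ler_pM2r.
nra.
Qed.

Lemma card_B_lower (delta alpha : R) : 0 < delta -> 3 <= q ->
  1 < 4 * alpha * q -> 3 * delta * q <= k%:R -> delta / (8 * alpha ^+ 2) <= #|B|%:R.
Proof.
move=> d0 q3 h4 k3.
have hB : 3 * delta * q * (q - 1) <= #|B|%:R.
  have := card_B_ge; rewrite -(ler_nat R) natrM -subn1 natrB ?card_F_gt0 //.
  by apply: le_trans; rewrite ler_pM2r ?subr_gt0 //; lra.
have a0 : 0 < alpha by nra.
have aa0 : 0 < 8 * alpha ^+ 2 by rewrite mulr_gt0 ?exprn_gt0.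
rewrite ler_pdivrMr //; apply: le_trans _ (ler_wpM2r (ltW aa0) hB).
have : delta * 1 <= delta * (4 * alpha * q) ^+ 2 by rewrite ler_pM2l // exprn_ege1 // ltW.
have : 0 <= delta * q * (q - 3) * (8 * alpha ^+ 2) by rewrite !mulr_ge0 ?subr_ge0 // ltW.
nra.
Qed.

Lemma T2_B_upper (delta alpha : R) : 0 < alpha -> 0 < delta <= 1 / 64 ->
  32 * delta ^+ 2 <= alpha -> 2 * alpha * q <= 1 -> k%:R <= 5 * delta * q ->
  (T2 B)%:R <= 16 * delta / alpha ^+ 4.
Proof.
move=> a0 hd hda haq k5; have q0 := q_gt0.
rewrite ler_pdivlMr ?exprn_gt0 //.
apply: le_trans (energy_bound_arith (k := k%:R) a0 q0 hd hda haq _); last first.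
  by rewrite ler0n k5.
apply: ler_wpM2r; first by rewrite exprn_ge0 // ltW.
have := T2_B_le; rewrite -(ler_nat R) !natrD !natrM => /le_trans; apply.
have hB : #|B|%:R <= k%:R * q by rewrite -natrM ler_nat card_B_le.
have k0 : 0 <= k%:R :> R by [].
have kkk : 0 <= k%:R * k%:R * k%:R :> R by rewrite !mulr_ge0.
have kkq : 0 <= k%:R * k%:R * q by rewrite !mulr_ge0 // ltW.
nra.
Qed.

End MomentSubspaces.

Section Embedding.
Variables (T : zmodType) (d n : nat) (bits : T -> nat -> bool).
Hypothesis bitsD : forall x y j, bits (x + y) j = bits x j + bits y j.
Hypothesis bits_eq0 : forall x, (forall j, (j < d)%N -> bits x j = false) -> x = 0.
Hypothesis dn : (3 * d <= n)%N.

Definition embed3 (u : T * T * T) : vec n :=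
  [ffun i : 'I_n => if (i < d)%N then bits u.1.1 i
                    else if (i < 2 * d)%N then bits u.1.2 (i - d)
                    else if (i < 3 * d)%N then bits u.2 (i - 2 * d) else false].

Lemma embed3D : {morph embed3 : u v / u + v}.
Proof.
by move=> u v; apply/ffunP => i; rewrite !ffunE /=; repeat case: ifP => _; rewrite ?bitsD.
Qed.

Lemma embed3_eq0 u : embed3 u = 0 -> u = 0.
Proof.
case: u => [[x y] z] e.
have bit0 m j : (m < 3)%N -> (j < d)%N -> exists2 i : 'I_n, val i = (m * d + j)%N
    & embed3 (x, y, z) i = false.
  move=> m3 jd; have hi : (m * d + j < n)%N by nia.
  by exists (Ordinal hi); rewrite // e ffunE.
have /bits_eq0 -> : forall j, (j < d)%N -> bits x j = false.
  move=> j jd; have [i /= iE] := bit0 0%N j isT jd.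
  by rewrite ffunE iE /= jd.
have /bits_eq0 -> : forall j, (j < d)%N -> bits y j = false.
  move=> j jd; have [i /= iE] := bit0 1%N j isT jd.
  rewrite ffunE iE /= mul1n; case: ifP => [?|_]; first lia.
  by case: ifP => [_|?]; [rewrite addKn | lia].
have /bits_eq0 -> // : forall j, (j < d)%N -> bits z j = false.
move=> j jd; have [i /= iE] := bit0 2%N j isT jd.
rewrite ffunE iE /=; do 2!(case: ifP => [?|_]; first lia).
by case: ifP => [_|?]; [rewrite addKn | lia].
Qed.

End Embedding.

Lemma F2_neq0D (a b : 'F_2) : (a + b != 0) = (a != 0) + (b != 0).
Proof. by case: a => [[|[|?]] ?] //; case: b => [[|[|?]] ?]. Qed.

Lemma exists_field_bits d : (0 < d)%N ->
  exists (F : finFieldType) (bits : F -> nat -> bool),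
    [/\ #|F| = (2 ^ d)%N, forall x y j, bits (x + y) j = bits x j + bits y j
      & forall x, (forall j, (j < d)%N -> bits x j = false) -> x = 0].
Proof.
move=> d0; have [F charF cardF] := @pPrimePowerField 2 d isT d0.
have [v2r v2r_lin v2r_bij] := pprimeChar_vectAxiom charF.
have dimF : logn 2 #|pPrimeCharType charF| = d by rewrite cardF pfactorK.
have v2rD (x y : F) : v2r (x + y) = v2r x + v2r y.
  by have := v2r_lin 1 x y; rewrite !scale1r.
pose bits (x : F) j := if insub j is Some u then v2r x 0 u != 0 else false.
exists F, bits; split => // [x y j|x bits0].
  by rewrite /bits; case: insubP => // u _ _; rewrite v2rD mxE F2_neq0D.
have v2r0 : v2r 0 = 0 by apply: (addrI (v2r 0)); rewrite -v2rD !addr0.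
apply: (bij_inj v2r_bij); rewrite v2r0; apply/rowP => u; rewrite mxE.
by have := bits0 (val u); rewrite -dimF ltn_ord /bits valK => /(_ isT)/negbFE/eqP.
Qed.

Lemma exists_moment_embedding d n : (0 < d)%N -> (3 * d <= n)%N ->
  exists (F : finFieldType) (emb : F * F * F -> vec n),
    [/\ #|F| = (2 ^ d)%N, {morph emb : u v / u + v} & forall u, emb u = 0 -> u = 0].
Proof.
move=> d0 dn; have [F [bits [cardF bitsD bits0]]] := exists_field_bits d0.
by exists F, (embed3 d n bits); split; [|exact: embed3D|exact: embed3_eq0].
Qed.

Lemma exists_pow2_between (R : realType) (x : R) :
  1 <= x -> exists d, (2 ^ d)%N%:R <= x < (2 ^ d.+1)%N%:R.
Proof.
move=> x1; have /andP[tx xt] := truncn_itv (le_trans ler01 x1).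
have t0 : (0 < Num.truncn x)%N by rewrite lt0n; apply/eqP => t0; move: xt; rewrite t0; lra.
exists (trunc_log 2 (Num.truncn x)); apply/andP; split.
  by apply: le_trans tx; rewrite ler_nat trunc_logP.
by apply: (lt_le_trans xt); rewrite ler_nat trunc_log_ltn.
Qed.

Lemma moment_dim_le (R : realType) (n d : nat) (alpha : R) : 0 < alpha ->
  ((2 ^ n)%N%:R : R) `^ (- 2 ^- 300) <= alpha -> (2 ^ d)%N%:R <= (2 * alpha)^-1 ->
  (3 * d <= n)%N.
Proof.
move=> a0; set N : R := (2 ^ n)%N%:R; set P := N `^ (2 ^- 300).
have N1 : 1 <= N by rewrite ler1n expn_gt0.
have P0 : 0 < P by rewrite powR_gt0 //; lra.
rewrite powRN => Pa qa.
have qP : (2 ^ d)%N%:R <= P.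
  by apply: le_trans qa _; rewrite invf_ple ?posrE ?mulr_gt0 //; lra.
have : P ^+ 3 <= N.
  rewrite -(powR_mulrn _ (ltW P0)) /P -powRrM.
  apply: le_trans (_ : _ <= N `^ 1) _; last by rewrite powRr1 ?ler0n.
  apply: ler_powR => //; rewrite mulrC ler_pdivrMr ?exprn_gt0 // mul1r.
  by rewrite -natrX ler_nat.
have q3 : (2 ^ d)%N%:R ^+ 3 <= P ^+ 3 by rewrite lerXn2r // nnegrE ?ler0n ?ltW.
by move/(le_trans q3); rewrite -natrX ler_nat -expnM leq_exp2l // mulnC.
Qed.

Lemma exists_field_scale (R : realType) (n : nat) (alpha : R) :
  0 < alpha -> alpha <= 2 ^- 30 -> ((2 ^ n)%N%:R : R) `^ (- 2 ^- 300) <= alpha ->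
  exists d, [/\ (0 < d)%N, (3 * d <= n)%N, 2 * alpha * (2 ^ d)%N%:R <= 1,
                1 < 4 * alpha * (2 ^ d)%N%:R & 3 <= (2 ^ d)%N%:R :> R].
Proof.
move=> a0 ha30 hN; have a2 : 0 < 2 * alpha by lra.
have a16 : alpha <= 1 / 16.
  apply: le_trans ha30 _; rewrite div1r lef_pV2 ?posrE ?exprn_gt0 //.
  by rewrite -natrX (_ : 16 = (2 ^ 4)%N%:R) // ler_nat leq_exp2l.
have [d /andP[qX Xq]] : exists d, (2 ^ d)%N%:R <= (2 * alpha)^-1 < (2 ^ d.+1)%N%:R.
  by apply: exists_pow2_between; rewrite invf_ge1 //; lra.
have haq : 2 * alpha * (2 ^ d)%N%:R <= 1 by rewrite -ler_pdivlMl // mulr1.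
have h4 : 1 < 4 * alpha * (2 ^ d)%N%:R.
  by rewrite -(ltr_pM2l a2) mulfV ?gt_eqF // expnS natrM in Xq; lra.
have q3 : 3 <= (2 ^ d)%N%:R :> R by nra.
exists d; split => //; last exact: moment_dim_le a0 hN qX.
by case: d q3 {qX Xq haq h4} => //; rewrite expn0; lra.
Qed.

Lemma exists_slopes (T : finType) (R : realType) (delta : R) :
  0 < delta <= 1 / 64 -> 1 <= 2 * delta * #|T|%:R ->
  exists k (lam : 'I_k -> T),
    [/\ injective lam, 3 * delta * #|T|%:R <= k%:R & k%:R <= 5 * delta * #|T|%:R].
Proof.
move=> /andP[d0 d64] h2; have k0 : 0 <= 5 * delta * #|T|%:R by nra.
have /andP[k5 kt] := truncn_itv k0; set k := Num.truncn _ in k5 kt.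
have kT : (k <= #|T|)%N by rewrite -(ler_nat R); apply: le_trans k5 _; nra.
exists k, (fun i => enum_val (widen_ord kT i)); split => //.
  by move=> i j /enum_val_inj [] /val_inj.
by rewrite -natr1 in kt; nra.
Qed.

Unset Implicit Arguments.
Theorem theorem28 (R : realType) (n : nat) (delta alpha : R) :
  (0 < n)%N ->
  0 < delta <= 1 -> 0 < alpha <= 1 ->
  32 * delta ^+ 2 <= alpha -> alpha <= delta / 2 ->
  ((2 ^+ n)%:R : R) `^ (- (2 ^- 300)) <= alpha ->
  alpha <= 2 ^- 30 ->
  (delta / alpha) * log2 (1 / (2 * alpha))
    >= 400 * log2 (2 ^+ n)%:R * log2 (8 * log2 (2 ^+ n)%:R) ->
  exists A : {set vec n},
    [/\ delta * (2 ^+ n)%:R <= (#|A|)%:R,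
        (#|A|)%:R <= 8 * delta * (2 ^+ n)%:R,
        (#|spec alpha A|)%:R >= delta / (8 * alpha ^+ 2) &
        ((T2 (spec alpha A))%:R : R) <= 16 * delta / alpha ^+ 4].
Proof.
move=> _ /andP[d0 _] /andP[a0 _] hda had; rewrite !natrXE => hN ha30 _.
have hd : 0 < delta <= 1 / 64 by rewrite d0 (delta_le_inv64 d0 hda had).
have [d [d_gt0 dn haq h4 q3]] := exists_field_scale a0 ha30 hN.
have [F [emb [cardF embD emb0]]] := exists_moment_embedding d_gt0 dn.
rewrite -cardF in haq h4 q3.
have h2 : 1 <= 2 * delta * #|F|%:R by nra.
have [k [lam [lam_inj k3 k5]]] := exists_slopes hd h2.
have /andP[lo hi] := card_A_bounds embD emb0 lam_inj hd k3 k5.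
exists (A emb lam); rewrite (spec_A embD emb0 lam_inj a0 hda haq k5); split => //.
  by have := card_B_lower embD emb0 lam_inj d0 q3 h4 k3.
by have := T2_B_upper embD emb0 lam_inj a0 hd hda haq k5.
Qed.
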